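(* The probability that a uniformly random sequence $B\in\{x,o\}^w$ is $x$-promoting is $\Omega(1)$, i.e. bounded below by a positive constant independent of $w$.
   Context: Associate $+1$ to $x$ and $-1$ to $o$. For $B\in\{x,o\}^w$ and $0\le j\le w$, let $\chi_j(B)$ be the sum of the first $j$ signs of $B$, $\chi(B)=\chi_w(B)$ the sum of all signs, and $\chi_{-j}(B)=\chi(B)-\chi_{w-j}(B)$ the sum of the last $j$ signs. $B$ is $x$-promoting if $\chi(B)\ge 5\sqrt w$ and for all $j=1,\dots,w$, $\chi_j(B)>-2\sqrt w$ and $\chi_{-j}(B)>-2\sqrt w$. *)

From mathcomp Require Import all_boot all_order all_algebra.
From mathcomp Require Import reals.
Set Implicit Arguments. Unset Strict Implicit. Unset Printing Implicit Defensive.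
Import Order.TTheory GRing.Theory Num.Theory.
Local Open Scope ring_scope.

(* A sequence B in {x,o}^w is a finite function 'I_w -> bool,
   with true = x (sign +1) and false = o (sign -1). *)
Definition sgn (b : bool) : int := if b then 1 else -1.

Definition chi_pre (w : nat) (B : {ffun 'I_w -> bool}) (j : nat) : int :=
  \sum_(i < w | (i < j)%N) sgn (B i).

Definition chi (w : nat) (B : {ffun 'I_w -> bool}) : int := chi_pre B w.

Definition chi_suf (w : nat) (B : {ffun 'I_w -> bool}) (j : nat) : int :=
  chi B - chi_pre B (w - j).

Definition x_promoting (R : realType) (w : nat) (B : {ffun 'I_w -> bool}) : bool :=
  (5 * Num.sqrt (w%:R : R) <= (chi B)%:~R) &&
  [forall j : 'I_w.+1, (0 < (j : nat))%N ==>
     ((- (2 * Num.sqrt (w%:R : R)) < (chi_pre B j)%:~R) &&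
      (- (2 * Num.sqrt (w%:R : R)) < (chi_suf B j)%:~R))].

Definition prob_x_promoting (R : realType) (w : nat) : R :=
  #|[set B : {ffun 'I_w -> bool} | x_promoting R B]|%:R / (2 ^ w)%:R.

(* Write w = r + 400 L with r < 400 and L > 0, and consider the words made of r letters x
   followed by 400 "good" blocks of length L: a block is good when its sign sum is at least
   sqrt L / 2 while its running sums stay strictly inside (-sqrt w, sqrt w).  Every prefix and
   every suffix of such a word has sign sum above -2 sqrt w, and its total is at least
   200 sqrt L >= 5 sqrt w, so it is x-promoting.  A uniform block is good with probability at
   least 73/800: by Paley-Zygmund (second and fourth moments of the simple random walk) its sum
   reaches sqrt L / 2 with probability at least 3/32, and by Kolmogorov's maximal inequality
   its running sums leave (-sqrt w, sqrt w) with probability at most L / w <= 1/400.  Hence the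
   probability is at least 2^-r (73/800)^400 >= (73/1600)^400. *)

From mathcomp Require Import all_boot all_order all_algebra.
From mathcomp Require Import reals.
From mathcomp Require Import ring lra zify.
Import Order.TTheory GRing.Theory Num.Theory.
Set Implicit Arguments. Unset Strict Implicit. Unset Printing Implicit Defensive.
Local Open Scope ring_scope.

Fixpoint bool_seqs (n : nat) : seq (seq bool) :=
  if n is n'.+1 then map (cons true) (bool_seqs n') ++ map (cons false) (bool_seqs n')
  else [:: [::]].

Lemma mem_bool_seqs n s : (s \in bool_seqs n) = (size s == n).
Proof.
elim: n s => [|n IHn] [|b s] //=; rewrite mem_cat.
  by apply/negbTE/norP; split; apply/mapP => -[].
have mem_map_cons c d t :
    (d :: t \in map (cons c) (bool_seqs n)) = (d == c) && (t \in bool_seqs n).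
  by apply/mapP/andP => [[x ? [-> ->]] | [/eqP-> ?]]; last exists t.
by rewrite !mem_map_cons IHn; case: b; rewrite ?orbF.
Qed.

Lemma uniq_bool_seqs n : uniq (bool_seqs n).
Proof.
have consK (c : bool) : injective (cons c) by move=> ? ? [].
elim: n => [|n IHn] //=; rewrite cat_uniq !(map_inj_uniq (consK _)) IHn /=.
by rewrite andbT; apply/hasPn => _ /mapP[s _ ->]; apply/mapP => -[].
Qed.

Lemma sum_bool_seqsS (V : nmodType) n (F : seq bool -> V) :
  \sum_(s <- bool_seqs n.+1) F s =
  \sum_(s <- bool_seqs n) F (true :: s) + \sum_(s <- bool_seqs n) F (false :: s).
Proof. by rewrite big_cat !big_map. Qed.

Lemma perm_bool_seqs_negb n : perm_eq (map (map negb) (bool_seqs n)) (bool_seqs n).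
Proof.
have negbK_seq : involutive (map negb) by apply: mapK; exact: negbK.
apply: uniq_perm; rewrite ?(map_inj_uniq (inv_inj negbK_seq)) ?uniq_bool_seqs //.
move=> s; rewrite -[s in LHS]negbK_seq (mem_map (inv_inj negbK_seq)).
by rewrite !mem_bool_seqs size_map.
Qed.

Lemma count_bool_seqs_negb n (P : pred (seq bool)) :
  count (P \o map negb) (bool_seqs n) = count P (bool_seqs n).
Proof. by rewrite -count_map; apply/permP/perm_bool_seqs_negb. Qed.

Lemma count_bool_seqs_cat n m (P1 P2 P : pred (seq bool)) :
  (forall a b, size a = n -> size b = m -> P1 a -> P2 b -> P (a ++ b)) ->
  (count P1 (bool_seqs n) * count P2 (bool_seqs m) <= count P (bool_seqs (n + m)))%N.
Proof.
elim: n P1 P => [|n IHn] P1 P catP /=.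
  rewrite addn0 add0n; case P1nil: (P1 [::]); rewrite ?mul0n // mul1n.
  rewrite (@eq_in_count _ P2 (fun b => (size b == m) && P2 b)) => [|b]; last first.
    by rewrite mem_bool_seqs => ->.
  by apply: sub_count => b /andP[/eqP sb P2b]; apply: (catP [::]).
rewrite !count_cat !count_map mulnDl leq_add // IHn // => a b sa sb.
  by move=> P1a P2b; apply: (catP (true :: a)); rewrite /= ?sa.
by move=> P1a P2b; apply: (catP (false :: a)); rewrite /= ?sa.
Qed.

Lemma count_reshape_ge (P : pred (seq bool)) L k :
  (count P (bool_seqs L) ^ k <=
   count (fun s => all P (reshape (nseq k L) s)) (bool_seqs (k * L)))%N.
Proof.
elim: k => [|k IHk] //; rewrite expnS mulSn.
apply: leq_trans (leq_mul (leqnn _) IHk) _; apply: count_bool_seqs_cat => a b sa _ Pa Pb.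
by rewrite /= take_size_cat // drop_size_cat // Pa.
Qed.

Definition ffun_of_seq w (s : seq bool) : {ffun 'I_w -> bool} :=
  [ffun i : 'I_w => nth false s i].

Lemma card_set_ffun_of_seq w (P : pred {ffun 'I_w -> bool}) :
  #|[set B | P B]| = count (fun s => P (ffun_of_seq w s)) (bool_seqs w).
Proof.
rewrite -count_map cardsE cardE /enum_mem -enumT size_filter; apply/permP.
apply: uniq_perm; first exact: enum_uniq.
  rewrite map_inj_in_uniq ?uniq_bool_seqs // => s1 s2.
  rewrite !mem_bool_seqs => /eqP s1w /eqP s2w eq12.
  apply: (@eq_from_nth _ false) => [|i]; first by rewrite s1w s2w.
  rewrite s1w => iw.
  by have := congr1 (fun B : {ffun 'I_w -> bool} => B (Ordinal iw)) eq12; rewrite !ffunE.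
move=> B; rewrite mem_enum; apply/esym/mapP; exists [seq B i | i <- enum 'I_w].
  by rewrite mem_bool_seqs size_map size_enum_ord.
by apply/ffunP => i; rewrite ffunE (nth_map i) ?size_enum_ord // nth_ord_enum.
Qed.

Lemma natr_count (R : pzSemiRingType) (T : Type) (P : pred T) (r : seq T) :
  (count P r)%:R = \sum_(x <- r) (P x)%:R :> R.
Proof. by elim: r => [|x r IHr]; rewrite ?big_nil ?big_cons //= natrD IHr. Qed.

Section RandomWalk.
Variable R : realFieldType.

Definition walk (s : seq bool) : R := (\sum_(b <- s) sgn b)%:~R.

Lemma walk_nil : walk [::] = 0.
Proof. by rewrite /walk big_nil. Qed.

Lemma walk_true s : walk (true :: s) = 1 + walk s.
Proof. by rewrite /walk big_cons intrD. Qed.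

Lemma walk_false s : walk (false :: s) = -1 + walk s.
Proof. by rewrite /walk big_cons intrD intrN. Qed.

Lemma walk_cat s1 s2 : walk (s1 ++ s2) = walk s1 + walk s2.
Proof. by rewrite /walk big_cat intrD. Qed.

Lemma walk_drop j s : walk (drop j s) = walk s - walk (take j s).
Proof. by rewrite -{2}(cat_take_drop j s) walk_cat addrC addKr. Qed.

Lemma walk_map_negb s : walk (map negb s) = - walk s.
Proof.
elim: s => [|[] s IHs]; rewrite /= ?walk_nil ?oppr0 // ?walk_true ?walk_false IHs; ring.
Qed.

Lemma walk_nseq_true r : walk (nseq r true) = r%:R.
Proof. by elim: r => [|r IHr]; rewrite ?walk_nil //= walk_true IHr mulrS. Qed.

Lemma sum_bool_seqs_1 n : \sum_(s <- bool_seqs n) 1 = 2 ^+ n :> R.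
Proof.
elim: n => [|n IHn]; first by rewrite big_seq1.
by rewrite sum_bool_seqsS IHn exprS; ring.
Qed.

Lemma sum_sqr_add_walk n x :
  \sum_(s <- bool_seqs n) (x + walk s) ^+ 2 = 2 ^+ n * (x ^+ 2 + n%:R).
Proof.
elim: n x => [|n IHn] x; first by rewrite big_seq1 walk_nil; ring.
rewrite sum_bool_seqsS.
under eq_bigr do rewrite walk_true addrA.
under [X in _ + X]eq_bigr do rewrite walk_false addrA.
by rewrite !IHn (exprS 2 n) -addn1 natrD; ring.
Qed.

Lemma sum_pow4_add_walk n x : \sum_(s <- bool_seqs n) (x + walk s) ^+ 4 =
  2 ^+ n * (x ^+ 4 + 6 * x ^+ 2 * n%:R + 3 * n%:R ^+ 2 - 2 * n%:R).
Proof.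
elim: n x => [|n IHn] x; first by rewrite big_seq1 walk_nil; ring.
rewrite sum_bool_seqsS.
under eq_bigr do rewrite walk_true addrA.
under [X in _ + X]eq_bigr do rewrite walk_false addrA.
by rewrite !IHn (exprS 2 n) -addn1 natrD; ring.
Qed.

Lemma sum_walk_sqr n : \sum_(s <- bool_seqs n) walk s ^+ 2 = 2 ^+ n * n%:R.
Proof.
have := sum_sqr_add_walk n 0; under eq_bigr do rewrite add0r.
by rewrite expr0n add0r.
Qed.

Lemma sum_walk_pow4 n :
  \sum_(s <- bool_seqs n) walk s ^+ 4 = 2 ^+ n * (3 * n%:R ^+ 2 - 2 * n%:R).
Proof.
have := sum_pow4_add_walk n 0; under eq_bigr do rewrite add0r.
by rewrite !expr0n /= mulr0 mul0r !add0r.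
Qed.

Fixpoint hits (l x : R) (s : seq bool) : bool :=
  (l <= `|x|) || if s is b :: s' then hits l (if b then x + 1 else x - 1) s' else false.

Lemma walk_take_lt_of_not_hits l x s :
  ~~ hits l x s -> forall k, `|x + walk (take k s)| < l.
Proof.
elim: s x => [|b s IHs] x /=; first by rewrite orbF -ltNge => lx k; rewrite walk_nil addr0.
rewrite negb_or -ltNge => /andP[lx not_hits] [|k] /=; first by rewrite walk_nil addr0.
by case: b not_hits => /IHs; rewrite ?walk_true ?walk_false addrA.
Qed.

Lemma ler_sqr_norm (a x : R) : 0 <= a -> (a ^+ 2 <= x ^+ 2) = (a <= `|x|).
Proof.
by move=> a0; rewrite -[x ^+ 2]real_normK ?num_real // ler_pXn2r ?nnegrE ?normr_ge0.
Qed.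

(* Kolmogorov's maximal inequality, by optional stopping: from the first time the walk
   reaches absolute value l, the mean of the square of its endpoint is at least l ^ 2. *)
Lemma sqr_mul_count_hits_le n l x : 0 <= l ->
  l ^+ 2 * (count (hits l x) (bool_seqs n))%:R <=
  \sum_(s <- bool_seqs n) (x + walk s) ^+ 2 * (hits l x s)%:R.
Proof.
move=> l0; rewrite natr_count; elim: n x => [|n IHn] x.
  rewrite !big_seq1 walk_nil addr0 /= orbF.
  by case lx: (l <= `|x|); rewrite ?mulr0 // !mulr1 ler_sqr_norm.
case lx: (l <= `|x|).
  have hitsT s : hits l x s by case: s => [|b s] /=; rewrite lx.
  under eq_bigr do rewrite hitsT.
  under [X in _ <= X]eq_bigr do rewrite hitsT mulr1.
  rewrite sum_bool_seqs_1 sum_sqr_add_walk mulrC ler_pM2l ?exprn_gt0 //.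
  by rewrite -[_ ^+ 2]addr0 lerD ?ler_sqr_norm.
rewrite !sum_bool_seqsS /= lx /= mulrDr; apply: lerD.
  by under [X in _ <= X]eq_bigr do rewrite walk_true addrA; apply: IHn.
by under [X in _ <= X]eq_bigr do rewrite walk_false addrA; apply: IHn.
Qed.

Lemma count_hits_le n l : 0 <= l ->
  l ^+ 2 * (count (hits l 0) (bool_seqs n))%:R <= 2 ^+ n * n%:R.
Proof.
move=> l0; apply: le_trans (sqr_mul_count_hits_le n 0 l0) _.
rewrite -sum_walk_sqr; apply: ler_sum => s _.
by rewrite add0r ler_piMr ?sqr_ge0 ?lern1 ?leq_b1.
Qed.

Lemma count_le_abs_walk_ge n t : (0 < n)%N -> 0 <= t -> t ^+ 2 <= n%:R / 4 ->
  3 / 16 * 2 ^+ n <= (count (fun s => t <= `|walk s|) (bool_seqs n))%:R :> R.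
Proof.
move=> n0 t0 tn; have N0 : 0 < n%:R :> R by rewrite ltr0n.
set z : R := (8 * n%:R)^-1.
(* Paley-Zygmund in pointwise form: if t <= |y| then y^2 <= 2 n + y^4 / (8 n) (AM-GM). *)
have pointwise y : y ^+ 2 <= t ^+ 2 * 1 + z * y ^+ 4 + 2 * n%:R * (t <= `|y|)%R%:R.
  rewrite mulr1; case: (lerP t `|y|) => [ty|yt]; rewrite ?mulr0 ?mulr1 ?addr0.
    have : 0 <= (y ^+ 2 - 4 * n%:R) ^+ 2 / (8 * n%:R) by rewrite divr_ge0 ?sqr_ge0; lra.
    have e : z * y ^+ 4 + 2 * n%:R - y ^+ 2 = (y ^+ 2 - 4 * n%:R) ^+ 2 / (8 * n%:R).
      by rewrite /z; field; lra.
    by have := sqr_ge0 t; lra.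
  have : y ^+ 2 < t ^+ 2 by rewrite ltNge ler_sqr_norm // -ltNge.
  have : 0 <= z * y ^+ 4 by rewrite mulr_ge0 ?invr_ge0 ?exprn_even_ge0 //; lra.
  lra.
have := @ler_sum _ _ (bool_seqs n) xpredT _ _ (fun s _ => pointwise (walk s)).
rewrite !big_split /= -!mulr_sumr sum_walk_sqr sum_walk_pow4 -natr_count sum_bool_seqs_1.
have e4 : z * (2 ^+ n * (3 * n%:R ^+ 2 - 2 * n%:R)) = 2 ^+ n * (3 * n%:R - 2) / 8.
  by rewrite /z; field; lra.
rewrite e4; set E := (count _ _)%:R; set P : R := 2 ^+ n => sum_ineq.
have P0 : 0 < P by rewrite exprn_gt0.
have : t ^+ 2 * P <= n%:R / 4 * P by rewrite ler_pM2r.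
have : 0 <= n%:R * (E - 3 / 16 * P) by nra.
by rewrite pmulr_rge0 //; lra.
Qed.

Lemma count_le_abs_walkE n t : 0 < t ->
  count (fun s => t <= `|walk s|) (bool_seqs n) =
  (count (fun s => t <= walk s) (bool_seqs n)).*2.
Proof.
move=> t0; rewrite -addnn -{2}(count_bool_seqs_negb n (fun s => t <= walk s)).
rewrite -count_predUI.
rewrite [X in (_ + X)%N](eq_count (a2 := pred0)) ?count_pred0 ?addn0 => [|s].
  by apply: eq_count => s; rewrite /= walk_map_negb ler_normr.
by apply/negbTE; rewrite /= walk_map_negb; apply/andP => -[]; lra.
Qed.

Lemma count_le_walk_ge n t : (0 < n)%N -> 0 < t -> t ^+ 2 <= n%:R / 4 ->
  3 / 32 * 2 ^+ n <= (count (fun s => t <= walk s) (bool_seqs n))%:R :> R.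
Proof.
move=> n0 t0 tn; have := count_le_abs_walk_ge n0 (ltW t0) tn.
by rewrite count_le_abs_walkE // -addnn natrD; lra.
Qed.

Definition good_block (t l : R) (s : seq bool) : bool := (t <= walk s) && ~~ hits l 0 s.

(* [73 / 800 = 3 / 32 - 1 / 400] *)
Lemma count_good_block_ge n t l : (0 < n)%N -> 0 < t -> t ^+ 2 <= n%:R / 4 ->
  0 < l -> 400 * n%:R <= l ^+ 2 ->
  73 / 800 * 2 ^+ n <= (count (good_block t l) (bool_seqs n))%:R :> R.
Proof.
move=> n0 t0 tn l0 ln; have N0 : 0 < n%:R :> R by rewrite ltr0n.
set G : R := (count (good_block t l) (bool_seqs n))%:R.
set H : R := (count (hits l 0) (bool_seqs n))%:R.
have split_count : (count (fun s => t <= walk s) (bool_seqs n))%:R <= G + H.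
  rewrite -natrD ler_nat -count_predUI (leq_trans _ (leq_addr _ _)) //.
  by apply: sub_count => s /=; rewrite /good_block; case: hits => ->.
have H_le : 400 * n%:R * H <= 2 ^+ n * n%:R.
  by apply: le_trans (count_hits_le n (ltW l0)); rewrite ler_wpM2r ?ler0n.
have H0 : 0 <= H := ler0n _ _.
by have := count_le_walk_ge n0 t0 tn; nra.
Qed.

Definition bounded_below (m : R) (s : seq bool) : Prop :=
  forall j, - m < walk (take j s) /\ - m < walk (drop j s).

Lemma bounded_below_cat m s1 s2 : bounded_below m s1 -> bounded_below m s2 ->
  0 <= walk s1 -> 0 <= walk s2 -> bounded_below m (s1 ++ s2).
Proof.
move=> bb1 bb2 s1_ge0 s2_ge0 j; rewrite take_cat drop_cat.
case: ifP => _; rewrite walk_cat.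
  by have [] := bb1 j; split => //; lra.
by have [] := bb2 (j - size s1)%N; split => //; lra.
Qed.

Lemma bounded_below_nseq_true m r : 0 < m -> bounded_below m (nseq r true).
Proof.
move=> m0 j; rewrite drop_nseq walk_nseq_true; have := ler0n R (r - j).
case: (leqP j r) => [jr | /ltnW rj].
  by rewrite take_nseq // walk_nseq_true; have := ler0n R j; lra.
by rewrite take_oversize ?size_nseq // walk_nseq_true; have := ler0n R r; lra.
Qed.

Lemma good_block_bounded_below t l s : good_block t l s -> bounded_below (2 * l) s.
Proof.
case/andP => _ /walk_take_lt_of_not_hits take_lt j.
have := take_lt (size s); have := take_lt j; rewrite take_size !add0r !ltr_norml.
rewrite walk_drop; lra.
Qed.

Lemma good_blocks_flatten t l bs : 0 < l -> 0 <= t -> all (good_block t l) bs ->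
  bounded_below (2 * l) (flatten bs) /\ (size bs)%:R * t <= walk (flatten bs).
Proof.
move=> l0 t0; elim: bs => [|b bs IHbs] /=.
  by split; rewrite ?mul0r ?walk_nil // => j; rewrite walk_nil; lra.
case/andP => good_b /IHbs[bb walk_ge]; have /andP[t_le _] := good_b.
split; last by rewrite walk_cat mulrSr; lra.
have := mulr_ge0 (ler0n R (size bs)) t0.
by move=> ?; apply: bounded_below_cat (good_block_bounded_below good_b) bb _ _; lra.
Qed.

End RandomWalk.

Lemma chi_pre_ffun_of_seq w s j : size s = w ->
  chi_pre (ffun_of_seq w s) j = \sum_(b <- take j s) sgn b.
Proof.
move=> sw; rewrite /chi_pre (big_nth false) big_mkord.
rewrite (big_ord_widen_cond w xpredT (fun i => sgn (nth false (take j s) i))); last first.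
  by rewrite size_take sw; case: ifP => // /ltnW.
apply: eq_big => i; last by move=> ij; rewrite ffunE nth_take.
by rewrite /= size_take sw; case: ifP => //; have := ltn_ord i; lia.
Qed.

Lemma x_promoting_ffun_of_seq (R : realType) w s : size s = w ->
  bounded_below (2 * Num.sqrt (w%:R : R)) s -> 5 * Num.sqrt w%:R <= walk R s ->
  x_promoting R (ffun_of_seq w s).
Proof.
move=> sw bb walk_ge.
have chi_preE j : (chi_pre (ffun_of_seq w s) j)%:~R = walk R (take j s).
  by rewrite chi_pre_ffun_of_seq.
have take_w : take w s = s by rewrite -sw take_size.
apply/andP; split; first by rewrite /chi chi_preE take_w.
apply/forallP => j; apply/implyP => _; rewrite /chi_suf intrB /chi !chi_preE take_w.
by rewrite -walk_drop; have [-> _] := bb j; have [_ ->] := bb (w - j)%N.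
Qed.

Lemma x_promoting_padded_blocks (R : realType) r L s :
  (0 < L)%N -> (r <= 400 * L)%N -> size s = (400 * L)%N ->
  all (good_block (Num.sqrt (L%:R : R) / 2) (Num.sqrt (r + 400 * L)%:R))
    (reshape (nseq 400 L) s) ->
  x_promoting R (ffun_of_seq (r + 400 * L) (nseq r true ++ s)).
Proof.
set w := (r + 400 * L)%N; set t : R := Num.sqrt L%:R / 2; set l : R := Num.sqrt w%:R.
move=> L0 rL ss good.
have l0 : 0 < l by rewrite sqrtr_gt0 ltr0n /w; lia.
have t0 : 0 <= t by rewrite divr_ge0 ?sqrtr_ge0.
have [bb walk_ge] := good_blocks_flatten l0 t0 good.
rewrite size_reshape size_nseq reshapeKr ?sumn_nseq ?ss 1?mulnC // in bb walk_ge.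
have r0 := ler0n R r.
apply: x_promoting_ffun_of_seq; first by rewrite size_cat size_nseq ss.
  apply: bounded_below_cat (bounded_below_nseq_true r _) bb _ _; [lra | | lra].
  by rewrite walk_nseq_true.
have five_le : 5 * l <= 200 * Num.sqrt L%:R.
  rewrite -(ler_pXn2r (isT : (0 < 2)%N)) ?nnegrE ?mulr_ge0 ?sqrtr_ge0 //.
  rewrite !exprMn !sqr_sqrtr ?ler0n // !expr2.
  have : w%:R <= 800 * L%:R :> R by rewrite -natrM ler_nat /w; lia.
  by have := ler0n R L; lra.
by rewrite -/l walk_cat walk_nseq_true; move: walk_ge; rewrite /t; lra.
Qed.

Lemma count_x_promoting_ge (R : realType) r L : (0 < L)%N -> (r <= 400 * L)%N ->
  (73 / 800 * 2 ^+ L) ^+ 400 <=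
  (count (fun s => x_promoting R (ffun_of_seq (r + 400 * L) s))
     (bool_seqs (r + 400 * L)))%:R :> R.
Proof.
move=> L0 rL; set t : R := Num.sqrt L%:R / 2; set l : R := Num.sqrt (r + 400 * L)%:R.
have blocks_ge : 73 / 800 * 2 ^+ L <= (count (good_block t l) (bool_seqs L))%:R :> R.
  have sqrt_L := sqr_sqrtr (ler0n R L).
  apply: count_good_block_ge => //.
  - by rewrite divr_gt0 ?sqrtr_gt0 ?ltr0n.
  - by rewrite /t expr_div_n sqrt_L expr2; lra.
  - by rewrite sqrtr_gt0 ltr0n; lia.
  - by rewrite sqr_sqrtr ?ler0n // -natrM ler_nat; lia.
have padded_ge : (count (good_block t l) (bool_seqs L) ^ 400 <=
    count (fun s => x_promoting R (ffun_of_seq (r + 400 * L) s)) (bool_seqs (r + 400 * L)))%N.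
  apply: leq_trans (count_reshape_ge _ L 400) _.
  have single : count (pred1 (nseq r true)) (bool_seqs r) = 1%N.
    by rewrite count_uniq_mem ?uniq_bool_seqs // mem_bool_seqs size_nseq eqxx.
  rewrite -[X in (X <= _)%N]mul1n -{1}single.
  apply: count_bool_seqs_cat => a s _ ss /eqP -> good_s.
  exact: x_promoting_padded_blocks.
apply: le_trans (_ : (count (good_block t l) (bool_seqs L))%:R ^+ 400 <= _).
  apply: lerXn2r => //; rewrite nnegrE ?ler0n //.
  by apply: mulr_ge0; [lra | exact: exprn_ge0].
by rewrite -natrX ler_nat.
Qed.

Theorem lemma1 (R : realType) :
  exists c : R, 0 < c /\
    exists w0 : nat, forall w : nat, (w0 <= w)%N -> c <= prob_x_promoting R w.
Proof.
exists ((73 / 1600) ^+ 400); split; first by apply: exprn_gt0; lra.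
exists 400%N => w w400.
have wE : w = (w %% 400 + 400 * (w %/ 400))%N by rewrite addnC mulnC -divn_eq.
rewrite /prob_x_promoting card_set_ffun_of_seq wE.
set r := (w %% 400)%N; set L := (w %/ 400)%N.
have L0 : (0 < L)%N by rewrite divn_gt0.
have r_lt : (r < 400)%N by rewrite ltn_pmod.
rewrite ler_pdivlMr ?ltr0n ?expn_gt0 //.
apply: le_trans (count_x_promoting_ge R L0 _); last by lia.
have padding : (2 : R) ^+ r <= 2 ^+ 400 by rewrite ler_eXn2l ?ltr1n // ltnW.
have -> : (73 / 800 * 2 ^+ L) ^+ 400 = (73 / 1600) ^+ 400 * (2 ^+ 400 * 2 ^+ (400 * L)) :> R.
  by rewrite mulnC exprM -!exprMn; congr (_ ^+ _); field.
rewrite natrX exprD ler_pM2l ?exprn_gt0 //; last by lra.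
by rewrite ler_pM2r ?exprn_gt0.
Qed.
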